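(* Let $n\ge2$ and $n\in\{p,p+1\}$ for a prime $p$. Then: (i) $p$ is an isolated vertex of $\mathcal O_0(S_n)$, and the type $[1^{n-p},p]$ is an isolated vertex of $P_0(\mathcal T(S_n))$; (ii) every vertex $[\psi]$ of $\widetilde P_0(S_n)$ with $o(\psi)=p$ is isolated in $\widetilde P_0(S_n)$; (iii) the number of components of $\widetilde P_0(S_n)$ containing vertices of order $p$ is $(p-2)!$ if $n=p$ and $(p+1)(p-2)!$ if $n=p+1$.
   Context: $\widetilde P_0(G)$: vertex set $\{[x]:x\in G\setminus\{1\}\}$ with $[x]=\{y:\langle y\rangle=\langle x\rangle\}$, distinct $[x],[y]$ adjacent iff some representatives are one a positive power of the other. $\mathcal O_0(G)$: vertices the element orders $\ne1$, distinct $m,m'$ adjacent iff one divides the other. For $\psi\in S_n$, $T_\psi$ is the partition of $n$ given by orbit lengths of $\langle\psi\rangle$; for $T=[m_1^{t_1},\dots,m_k^{t_k}]$, $T^a=[(m_i/\gcd(a,m_i))^{t_i\gcd(a,m_i)}]_i$. $P_0(\mathcal T(S_n))$: vertices the partitions of $n$ other than $[1^n]$, distinct $T,T'$ adjacent iff one is a power of the other. *)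

From mathcomp Require Import all_boot all_order all_fingroup.
Set Implicit Arguments. Unset Strict Implicit. Unset Printing Implicit Defensive.
Local Open Scope group_scope.

Section RPG.
Variable gT : finGroupType.

Definition cls (x : gT) : {set gT} := [set y | <[y]> == <[x]>].

Definition rpg_vertices : {set {set gT}} := [set cls x | x in [set~ 1]].

(* distinct [x],[y] adjacent iff some representatives are one a positive
   power of the other; in a finite group "a is a positive power of b" is
   exactly a \in <[b]>. *)
Definition rpg_adj : rel {set gT} := fun A B =>
  [&& A \in rpg_vertices, B \in rpg_vertices, A != B &
      [exists a in A, exists b in B, (a \in <[b]>) || (b \in <[a]>)]].

Definition rpg_isolated (A : {set gT}) : Prop :=
  A \in rpg_vertices /\ forall B, ~~ rpg_adj A B.

Definition rpg_components : {set {set {set gT}}} :=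
  [set [set B | connect rpg_adj A B] | A in rpg_vertices].

Definition rpg_ncomp_order (m : nat) : nat :=
  #|[set C in rpg_components |
       [exists x : gT, [&& x != 1, #[x] == m & cls x \in C]]]|.

Definition og_vertex (m : nat) : Prop := (exists x : gT, #[x] = m) /\ m <> 1%N.

Definition og_adj (m m' : nat) : Prop := m <> m' /\ (m %| m' \/ m' %| m).

Definition og_isolated (m : nat) : Prop :=
  og_vertex m /\ forall m', og_vertex m' -> ~ og_adj m m'.
End RPG.
Local Close Scope group_scope.

Definition is_partition (n : nat) (T : seq nat) : Prop :=
  sorted geq T /\ all (fun m => 0 < m) T /\ sumn T = n.

Definition tpow (T : seq nat) (a : nat) : seq nat :=
  sort geq (flatten [seq nseq (gcdn a m) (m %/ gcdn a m) | m <- T]).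

Definition tg_vertex (n : nat) (T : seq nat) : Prop :=
  is_partition n T /\ T <> nseq n 1.

Definition tg_adj (T T' : seq nat) : Prop :=
  T <> T' /\ ((exists a, T' = tpow T a) \/ (exists a, T = tpow T' a)).

Definition tg_isolated (n : nat) (T : seq nat) : Prop :=
  tg_vertex n T /\ forall T', tg_vertex n T' -> ~ tg_adj T T'.

(* An element c of order p in S_n with n <= p+1 is a p-cycle fixing at most one point.
   If b commutes with c, then b maps the orbit of a moved point x to itself, say
   b x = c^j x, and b c^-j fixes the whole orbit, hence is the identity: the centraliser
   of c is <c>.  So an element of order divisible by p has order p, and <c> is both
   maximal and minimal among nontrivial cyclic subgroups, which isolates [c].  All
   p-cycles are conjugate to a standard one, so there are n!/p of them, falling into
   classes [c] of size p-1, one component each: n!/(p(p-1)) components.  The powers of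
   the type [p, 1^(n-p)] are itself and [1^n], and since n < 2p any partition having
   it as a power has a part p, which forces it to be [p, 1^(n-p)]. *)

From mathcomp Require Import all_boot all_order all_fingroup all_solvable.
From mathcomp Require Import zify.
Set Implicit Arguments. Unset Strict Implicit. Unset Printing Implicit Defensive.

Section CyclicClasses.
Local Open Scope group_scope.
Variable gT : finGroupType.
Implicit Types x y : gT.

Lemma mem_cls x y : (y \in cls x) = (<[y]> == <[x]>).
Proof. by rewrite inE. Qed.

Lemma cls_id x : x \in cls x.
Proof. by rewrite mem_cls. Qed.

Lemma eq_cls x y : <[x]> = <[y]> -> cls x = cls y.
Proof. by move=> exy; apply/setP => z; rewrite !mem_cls exy. Qed.

Lemma card_cls x : #|cls x| = totient #[x].
Proof. by rewrite totient_gen; apply: eq_card => y; rewrite !inE /generator eq_sym. Qed.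

Lemma card_order_cls m :
  #|[set x : gT | #[x] == m]|
    = (#|[set cls x | x in [set x : gT | #[x] == m]]| * totient m)%N.
Proof.
apply: card_uniform_partition.
  by move=> _ /imsetP[x /[!inE] /eqP <- ->]; exact: card_cls.
apply/and3P; split.
- apply/eqP/setP => y; apply/bigcupP/idP => [[_ /imsetP[x ox ->]]|oy].
    by rewrite mem_cls => /eqP eyx; move: ox; rewrite !inE /order eyx.
  by exists (cls y); [apply: imset_f | exact: cls_id].
- apply/trivIsetP => _ _ /imsetP[x _ ->] /imsetP[y _ ->] ne_xy.
  apply/pred0P => z /=; apply: contraNF ne_xy; rewrite !mem_cls => /andP[/eqP zx /eqP zy].
  by rewrite (eq_cls (etrans (esym zx) zy)).
- by apply/imsetP => -[x _ /setP/(_ x)]; rewrite cls_id inE.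
Qed.

Lemma cls_isolated x : x != 1 ->
    (forall y, y != 1 -> (<[x]> \subset <[y]>) || (<[y]> \subset <[x]>) -> <[y]> = <[x]>) ->
  rpg_isolated (cls x).
Proof.
move=> nx1 cyc_extremal; split; first by apply: imset_f; rewrite !inE.
move=> B; apply/negP => /and4P[_ /imsetP[y /[!inE] ny1 ->] ne_xy].
case/existsP => a /andP[/[!mem_cls]/eqP ax /existsP[b /andP[/[!mem_cls]/eqP by_ ab]]].
have comparable : (<[x]> \subset <[y]>) || (<[y]> \subset <[x]>).
  by rewrite -ax -by_ !cycle_subG.
by move: ne_xy; rewrite (eq_cls (cyc_extremal y ny1 comparable)) eqxx.
Qed.

Lemma rpg_adj_sym : symmetric (@rpg_adj gT).
Proof.
suff adjC : forall A B : {set gT}, rpg_adj A B -> rpg_adj B A.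
  by move=> A B; apply/idP/idP; apply: adjC.
move=> A B; rewrite /rpg_adj => /and4P[vA vB neAB].
case/existsP => a /andP[Aa /existsP[b /andP[Bb ab]]].
rewrite vA vB eq_sym neAB; apply/existsP; exists b; rewrite Bb /=.
by apply/existsP; exists a; rewrite Aa orbC.
Qed.

Lemma connect_isolated A B : rpg_isolated A -> connect (@rpg_adj gT) A B = (B == A).
Proof.
case=> _ isoA; apply/idP/eqP => [|->]; last exact: connect0.
by case/connectP => -[_ -> //|C s /= /andP[adjAC _] _]; move: (isoA C); rewrite adjAC.
Qed.

Lemma rpg_ncomp_order_isolated m : m != 1%N ->
    (forall x : gT, #[x] = m -> rpg_isolated (cls x)) ->
  rpg_ncomp_order gT m = #|[set cls x | x in [set x : gT | #[x] == m]]|.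
Proof.
move=> m_neq1 iso_m.
have compE x : #[x] = m -> [set B | connect (@rpg_adj gT) (cls x) B] = [set cls x].
  by move=> ox; apply/setP => B; rewrite !inE connect_isolated //; exact: iso_m.
rewrite -(card_imset _ set1_inj) /rpg_ncomp_order; apply: eq_card => C.
rewrite inE; apply/andP/imsetP => [[/imsetP[A vA ->] /existsP[x /and3P[_ /eqP ox]]]|].
  rewrite inE (sym_connect_sym rpg_adj_sym) connect_isolated; last exact: iso_m.
  move=> /eqP ->.
  by exists (cls x); [apply: imset_f; rewrite inE ox | rewrite compE].
case=> _ /imsetP[x /[!inE] /eqP ox ->] ->; rewrite -compE //; split.
  by apply: imset_f; case: (iso_m x ox).
have nx1 : x != 1 by rewrite -order_eq1 ox.
by apply/existsP; exists x; rewrite nx1 ox eqxx inE connect0.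
Qed.
End CyclicClasses.

Section PrimeOrderPerm.
Local Open Scope group_scope.
Variables (T : finType) (p : nat).
Hypotheses (p_pr : prime p) (card_T : #|T| <= p.+1).
Implicit Types b c : {perm T}.

Lemma card_porbit_prime c x : #[c] = p -> c x != x -> #|porbit c x| = p.
Proof.
move=> oc cx; have : #|porbit c x| %| #[c] by rewrite porbitE; exact: dvdn_orbit.
rewrite oc => /(prime_nt_dvdP p_pr)-> //.
apply: contra cx => /eqP/eq_leq/card_le1_eqP eqO.
by apply/eqP; apply: eqO; [exact: porbit_id | exact: (mem_porbit c 1)].
Qed.

Lemma notin_porbit_prime_fixed c x z : #[c] = p -> c x != x ->
  z \notin porbit c x -> c z = z.
Proof.
move=> oc cx zO; have /card_le1_eqP eqOC : #|~: porbit c x| <= 1.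
  by have := cardsC (porbit c x); rewrite card_porbit_prime //; lia.
have czO : c z \notin porbit c x.
  by rewrite porbit_sym -[c z]/((c ^+ 1) z) porbit_perm -porbit_sym.
by apply: eqOC; rewrite inE.
Qed.

Lemma prime_perm_moved c : #[c] = p -> exists x, c x != x.
Proof.
move=> oc; apply/existsP; apply: contraTT p_pr => /existsPn fix_c.
suff c1 : c = 1 by rewrite -oc c1 order1.
by apply/permP => y; rewrite perm1; apply/eqP; rewrite -[_ == _]negbK fix_c.
Qed.

Lemma cent1_prime_perm b c : #[c] = p -> commute b c -> b \in <[c]>.
Proof.
move=> oc cbc; have [x cx] := prime_perm_moved oc.
have /porbitP[j bxE] : b x \in porbit c x.
  apply/negPn/negP => /(notin_porbit_prime_fixed oc cx).
  by rewrite -permM cbc permM => /perm_inj cxx; rewrite cxx eqxx in cx.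
pose d := b * (c ^+ j)^-1.
have dx : d x = x by rewrite permM bxE permK.
have d_on : perm_on (~: porbit c x) d.
  apply/subsetP => y; rewrite !inE; apply: contraNN => /porbitP[i ->].
  have cdi : commute d (c ^+ i).
    apply/commuteX/commute_sym/commuteM; first exact: commute_sym.
    exact/commuteV/commuteX.
  by rewrite -permM -cdi permM dx.
have d1 : d = 1.
  apply: (perm_on_id d_on).
  by have := cardsC (porbit c x); rewrite card_porbit_prime //; lia.
by rewrite -(mulgKV (c ^+ j) b) -/d d1 mul1g mem_cycle.
Qed.

Lemma prime_dvd_order_perm b : p %| #[b] -> #[b] = p.
Proof.
move=> p_dvd_b; pose c := b ^+ (#[b] %/ p).
have oc : #[c] = p by rewrite orderXdiv ?dvdn_div // divnA // mulKn.
have : b \in <[c]> by apply: cent1_prime_perm oc _; apply: commuteX.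
rewrite -cycle_subG => /subset_leq_card; rewrite -!orderE oc => ob_le_p.
by apply/eqP; rewrite eqn_leq ob_le_p dvdn_leq.
Qed.

Lemma cls_prime_perm_isolated c : #[c] = p -> rpg_isolated (cls c).
Proof.
move=> oc; have c1 : c != 1 by rewrite -order_eq1 oc; apply: contraTneq p_pr => ->.
apply: cls_isolated c1 _ => y y1 comparable.
have oy : #[y] = p.
  case/orP: comparable => sub.
    by apply: prime_dvd_order_perm; rewrite -oc cardSg.
  by apply/(prime_nt_dvdP p_pr); rewrite ?order_eq1 // -oc cardSg.
apply/eqP; case/orP: comparable => sub; first rewrite eq_sym.
  by rewrite eqEcard sub -orderE -[#|<[c]>|]orderE oc oy /=.
by rewrite eqEcard sub -orderE -[#|<[y]>|]orderE oc oy /=.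
Qed.
End PrimeOrderPerm.

Section StandardCycle.
Local Open Scope group_scope.
Variables (n p : nat).
Hypotheses (p_pr : prime p) (p_le_n : p <= n) (n_le_p1 : n <= p.+1).
Local Notation G := {perm 'I_n}.
Let card_In : #|'I_n| <= p.+1. Proof. by rewrite card_ord. Qed.

Definition pcycle_fun (i : 'I_n) : 'I_n :=
  if i < p then insubd i (i.+1 %% p) else i.

Lemma val_pcycle_fun (i : 'I_n) :
  (pcycle_fun i : nat) = if i < p then i.+1 %% p else i.
Proof.
rewrite /pcycle_fun; case: ifP => // _.
by rewrite val_insubd (leq_trans _ p_le_n) // ltn_pmod // prime_gt0.
Qed.

Lemma pcycle_fun_inj : injective pcycle_fun.
Proof.
have pinv (i : 'I_n) :
    (i : nat) = if pcycle_fun i < p then (pcycle_fun i + p.-1) %% p else pcycle_fun i.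
  rewrite !val_pcycle_fun; case: (ltnP i p) => ip; last by rewrite ltnNge ip.
  rewrite ltn_pmod ?prime_gt0 // modnDml addSnnS prednK ?prime_gt0 //.
  by rewrite modnDr modn_small.
by move=> i j eij; apply: ord_inj; rewrite pinv eij -pinv.
Qed.

Definition pcycle : G := perm pcycle_fun_inj.

Lemma pcycleX k (i : 'I_n) :
  ((pcycle ^+ k) i : nat) = if i < p then (i + k) %% p else i.
Proof.
elim: k => [|k IHk]; first by rewrite expg0 perm1 addn0; case: ifP => // /modn_small.
rewrite expgSr permM permE val_pcycle_fun IHk.
case: (ltnP i p) => ip; last by rewrite ltnNge ip.
by rewrite ltn_pmod ?prime_gt0 // -addn1 modnDml addn1 addnS.
Qed.

Lemma order_pcycle : #[pcycle] = p.
Proof.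
apply/(prime_nt_dvdP p_pr).
  pose i0 := Ordinal (leq_trans (prime_gt0 p_pr) p_le_n).
  rewrite order_eq1; apply/eqP => /permP/(_ i0)/(congr1 (@nat_of_ord n)).
  by rewrite perm1 permE val_pcycle_fun prime_gt0 // modn_small ?prime_gt1.
rewrite order_dvdn; apply/eqP/permP => i; apply: ord_inj.
by rewrite pcycleX perm1; case: ifP => // ip; rewrite modnDr modn_small.
Qed.

Section Labelling.
Variables (d : G) (y0 : 'I_n).
Hypotheses (od : #[d] = p) (dy0 : d y0 != y0).
Let O := porbit d y0.
(* The default y0 is junk: w only matters when n = p+1, and then it is the fixed point. *)
Let w := odflt y0 [pick z | z \notin O].

Lemma pick_notin_porbit : p < n -> w \notin O.
Proof.
rewrite /w; case: pickP => [z -> //|all_in] p_lt_n.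
have : #|'I_n| <= #|O| by apply/subset_leq_card/subsetP => z _; exact/negbFE/all_in.
by rewrite card_ord (card_porbit_prime p_pr od dy0) leqNgt p_lt_n.
Qed.

Definition label (i : 'I_n) : 'I_n := if i < p then (d ^+ i) y0 else w.

Lemma label_inj : injective label.
Proof.
have outside (i : 'I_n) : ~~ (i < p) -> w \notin O.
  by rewrite -leqNgt => /leq_ltn_trans/(_ (ltn_ord i)); exact: pick_notin_porbit.
move=> i j; rewrite /label.
case: ifP => ip; case: ifP => jp eij.
- apply/val_inj/eqP; rewrite -(@nth_uniq _ y0 (traject d y0 p)) ?size_traject //.
    by rewrite !nth_traject // -!permX eij.
  by rewrite -(card_porbit_prime p_pr od dy0); exact: uniq_traject_porbit.
- by have := outside j (negbT jp); rewrite -eij mem_porbit.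
- by have := outside i (negbT ip); rewrite eij mem_porbit.
- apply: ord_inj; move: (negbT ip) (negbT jp) (ltn_ord i) (ltn_ord j); lia.
Qed.

Lemma label_pcycle i : label (pcycle_fun i) = d (label i).
Proof.
rewrite /label val_pcycle_fun.
case: (ltnP i p) => ip.
  by rewrite ltn_pmod ?prime_gt0 // -od expg_mod_order expgSr permM.
rewrite ltnNge ip /=; apply/esym/(notin_porbit_prime_fixed p_pr card_In od dy0).
by apply: pick_notin_porbit; apply: leq_ltn_trans ip (ltn_ord i).
Qed.
End Labelling.

Lemma conj_pcycle d : #[d] = p -> exists g : G, d = pcycle ^ g.
Proof.
move=> od; have [y0 dy0] := prime_perm_moved p_pr od.
pose g : G := perm (label_inj od dy0); exists g.
have gd : g * d = pcycle * g.
  by apply/permP => i; rewrite !permM !permE label_pcycle.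
by rewrite conjgE -gd mulKg.
Qed.

Lemma cent1_pcycle : 'C_[set: G][pcycle] = <[pcycle]>.
Proof.
apply/setP => x; rewrite inE in_setT /=; apply/cent1P/idP.
  by move=> cx; apply: (cent1_prime_perm p_pr card_In order_pcycle); apply/commute_sym.
by case/cycleP => k ->; apply/commute_sym/commuteX.
Qed.

Lemma card_order_prime_perm : (#|[set x : G | #[x] == p]| * p)%N = n`!.
Proof.
have -> : [set x : G | #[x] == p] = pcycle ^: [set: G].
  apply/setP => x; rewrite inE; apply/eqP/imsetP => [/conj_pcycle[g ->]|[g _ ->]].
    by exists g; rewrite ?inE.
  by rewrite orderJ order_pcycle.
rewrite -index_cent1 cent1_pcycle -{1}order_pcycle orderE mulnC.
by rewrite Lagrange ?subsetT // cardsT card_Sn.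
Qed.

Lemma og_isolated_prime_perm : og_isolated G p.
Proof.
split=> [|_ [[b <-] b1] [pb [p_dvd_b|b_dvd_p]]].
- by split; [exists pcycle; exact: order_pcycle | move=> p1; move: p_pr; rewrite p1].
- by apply: pb; rewrite (prime_dvd_order_perm p_pr card_In p_dvd_b).
- by apply: pb; apply/esym/(prime_nt_dvdP p_pr _ b_dvd_p)/eqP.
Qed.
End StandardCycle.

Lemma geq_trans : transitive geq.
Proof. by move=> a b c /= ba cb; apply: leq_trans cb ba. Qed.

Lemma sorted_geq_nseq m x : sorted geq (nseq m x).
Proof. by case: m => //= m; elim: m => //= m ->; rewrite leqnn. Qed.

Lemma pos_sumn_le1 (s : seq nat) :
  all (fun m => 0 < m) s -> sumn s <= 1 -> s = nseq (sumn s) 1.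
Proof.
case: s => [|x [|y s]] //=; first by rewrite addn0; case: x => [|[|]].
by case/and3P => x0 y0 _; lia.
Qed.

Section HookType.
Variables (p k : nat).
Hypotheses (p_pr : prime p) (k_le1 : k <= 1).

Definition hook := p :: nseq k 1.

Lemma sorted_hook : sorted geq hook.
Proof. by rewrite /hook; case: k k_le1 => [|[|]] //= _; rewrite prime_gt0. Qed.

Lemma sumn_hook : sumn hook = p + k.
Proof. by rewrite /hook; case: k k_le1 => [|[|]] //= _; rewrite ?addn0. Qed.

Lemma hook_partition : is_partition (p + k) hook.
Proof.
split; first exact: sorted_hook.
by split; [rewrite /= prime_gt0 // all_nseq orbT | exact: sumn_hook].
Qed.

Lemma tpow_hook a : tpow hook a = hook \/ tpow hook a = nseq (p + k) 1.
Proof.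
rewrite /tpow /hook /= map_nseq gcdn1 divn1.
have -> : flatten (nseq k [:: 1]) = nseq k 1 by case: k k_le1 => [|[|]].
case/primeP: p_pr => _ /(_ _ (dvdn_gcdr a p))/orP[]/eqP->.
  by left; rewrite divn1 sorted_sort //; [exact: geq_trans | exact: sorted_hook].
right; rewrite divnn prime_gt0 // -nseqD sorted_sort //.
  exact: geq_trans.
exact: sorted_geq_nseq.
Qed.

Lemma hook_mem_tpow T a : is_partition (p + k) T -> p \in tpow T a -> p \in T.
Proof.
case=> _ [T_pos sumT]; rewrite /tpow mem_sort.
case/flattenP => _ /mapP[m mT ->]; rewrite mem_nseq => /andP[g_pos /eqP p_eq].
suff g1 : gcdn a m = 1 by rewrite p_eq g1 divn1.
have m_le : m <= p + k by rewrite -sumT (perm_sumn (perm_to_rem mT)) /= leq_addr.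
have m_eq : m = p * gcdn a m by rewrite p_eq divnK // dvdn_gcdr.
have p_gt1 := prime_gt1 p_pr.
move: (gcdn a m) m_eq g_pos => g m_eq g_pos; nia.
Qed.

Lemma hook_of_mem T : is_partition (p + k) T -> p \in T -> T = hook.
Proof.
case=> sT [T_pos sumT] pT.
have sum_rem : sumn (rem p T) = k.
  by move: sumT; rewrite (perm_sumn (perm_to_rem pT)) /=; lia.
have rem_ones : rem p T = nseq k 1.
  rewrite -sum_rem; apply: pos_sumn_le1; last by rewrite sum_rem.
  by apply/allP => x /mem_rem; move/allP: T_pos; apply.
apply: (sorted_eq geq_trans) sT sorted_hook _.
  by move=> x y; rewrite /= -eqn_leq eq_sym => /eqP.
by rewrite /hook -rem_ones perm_to_rem.
Qed.

Lemma hook_tg_isolated : tg_isolated (p + k) hook.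
Proof.
have p_gt1 := prime_gt1 p_pr.
have not_ones : hook <> nseq (p + k) 1.
  by rewrite (_ : p + k = (p.-1 + k).+1); [case=> p1; rewrite p1 in p_gt1 | lia].
split=> [|T [partT not1] [neq [[a TE]|[a hookE]]]].
- by split; [exact: hook_partition | exact: not_ones].
- by case: (tpow_hook a) => tpowE; [apply: neq | apply: not1]; rewrite TE tpowE.
- apply: neq; apply/esym/hook_of_mem => //.
  by apply: (hook_mem_tpow (a := a) partT); rewrite -hookE mem_head.
Qed.
End HookType.

Lemma mul_pred_fact_cancel c m p :
  1 < p -> c * p.-1 * p = m * p`! -> c = m * (p - 2)`!.
Proof.
case: p => [|[|q]] // _; rewrite subSS subSS subn0 !factS /= => e.
apply/eqP; rewrite -(eqn_pmul2r (_ : 0 < q.+1 * q.+2)) // mulnA e; apply/eqP; lia.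
Qed.

Theorem lemma7p3 (n p : nat) (hp : prime p) (hn : 2 <= n)
    (hnp : n = p \/ n = p.+1) :
  (og_isolated {perm 'I_n} p /\
   tg_isolated n (p :: nseq (n - p) 1)) /\
  (forall psi : {perm 'I_n}, #[psi]%g = p -> rpg_isolated (cls psi)) /\
  (n = p -> rpg_ncomp_order {perm 'I_n} p = (p - 2)`!) /\
  (n = p.+1 -> rpg_ncomp_order {perm 'I_n} p = p.+1 * (p - 2)`!).
Proof.
have p_le_n : p <= n by case: hnp => ->.
have n_le_p1 : n <= p.+1 by case: hnp => ->.
have card_In : #|'I_n| <= p.+1 by rewrite card_ord.
have p_gt1 := prime_gt1 hp.
have iso_p := cls_prime_perm_isolated hp card_In.
have ncomp : rpg_ncomp_order {perm 'I_n} p * p.-1 * p = n`!.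
  rewrite rpg_ncomp_order_isolated ?neq_ltn ?p_gt1 ?orbT // -totient_prime //.
  by rewrite -card_order_cls card_order_prime_perm.
split; [split|split; [exact: iso_p | split => n_eq]].
- exact: og_isolated_prime_perm.
- by rewrite -{1}(subnKC p_le_n); apply: hook_tg_isolated; lia.
- by rewrite -[_`!]mul1n; apply: mul_pred_fact_cancel; rewrite // ncomp n_eq mul1n.
- by apply: mul_pred_fact_cancel; rewrite // ncomp n_eq factS.
Qed.
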